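(* Let Algorithm DEW be run with learning rate $\eta>0$ and delay bound $d_{\max}\ge\max_t d_t$, with $\eta'=\min\{\eta,(4e\,d_{\max})^{-1}\}$, and suppose $N=\max_{t\in[T]}N_t\ge1$. Then for every $i\in\{1,\dots,T\}$ and every $a\in[K]$, for every realization, $$q^a(\Psi_i)\le\left(1+\frac{1}{2N-1}\right)q^a(\Psi_{i-1}).$$
   Context: Setting: fix integers $K\ge 2$, $T\ge 1$, $[K]=\{1,\dots,K\}$. An oblivious adversary fixes in advance losses $\ell_t^a\in[0,1]$ and nonnegative integer delays $d_t$. In each round $t$ the learner picks $A_t\in[K]$ and at the end of round $t$ observes the pairs $(s,\ell_s^{A_s})$ for all $s\le t$ with $s+d_s=t$. Algorithm DEW with inputs $\eta>0$ and $d_{\max}$: set $\eta'=\min\{\eta,(4e\,d_{\max})^{-1}\}$, $w_0^a=1$. For $t=1,2,\dots$: $p_t^a=w_{t-1}^a/\sum_b w_{t-1}^b$; draw $A_t\sim p_t$; at the end of round $t$, for every $s$ with $s+d_s=t$ form $\hat\ell_s^a=\ell_s^a\mathbb 1(a=A_s)/p_s^a$; update $w_t^a=w_{t-1}^a\exp(-\eta'\sum_{s:\,s+d_s=t}\hat\ell_s^a)$. Notation: for a set $C$ of time indices, $q^a(C)=\dfrac{\exp(-\eta'\sum_{s\in C}\hat\ell_s^a)}{\sum_b\exp(-\eta'\sum_{s\in C}\hat\ell_s^b)}$. $N_t=|\{s\in[T]: s+d_s\in[t,t+d_t)\}|$ and $N=\max_tN_t$ (note $N\le 2d_{\max}$).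 $\mathcal Z=(z_1,\dots,z_T)$ is the permutation of $[T]$ sorted in ascending order of $z+d_z$, ties broken randomly, and $\Psi_i=\{z_1,\dots,z_i\}$ (so $\Psi_0=\emptyset$). *)

From Stdlib Require Import Reals Lra Lia Arith List Bool.
Import ListNotations.
Open Scope R_scope.

(* Conventions: rounds are 1..T; arms [K] are encoded as 0..K-1.
   ell t a : loss of arm a at round t; d t : delay of round t;
   A t : arm played at round t (a realization). *)

Definition rsum (l : list nat) (f : nat -> R) : R :=
  fold_right (fun x acc => f x + acc) 0 l.

Definition eta_eff (eta : R) (dmax : nat) : R :=
  if Nat.eqb dmax 0 then eta else Rmin eta (/ (4 * exp 1 * INR dmax)).

Definition lhat (ell : nat -> nat -> R) (A : nat -> nat) (p : nat -> nat -> R)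
  (s a : nat) : R :=
  if Nat.eqb a (A s) then ell s a / p s a else 0.

Definition observed (d : nat -> nat) (t : nat) : list nat :=
  filter (fun s => Nat.leb (s + d s) t) (seq 1 t).

Definition qdist (K : nat) (eta' : R) (ell : nat -> nat -> R) (A : nat -> nat)
  (p : nat -> nat -> R) (C : list nat) (a : nat) : R :=
  exp (- eta' * rsum C (fun s => lhat ell A p s a)) /
  rsum (seq 0 K) (fun b => exp (- eta' * rsum C (fun s => lhat ell A p s b))).

(* p is the DEW sampling distribution: p_t^a = w_{t-1}^a / sum_b w_{t-1}^b,
   where w_{t-1}^a = exp(-eta' * sum of lhat over rounds observed by end of t-1).
   This recursion determines p_t (t in [1,T]) uniquely, since it only uses p_s, s < t. *)
Definition is_DEW_prob (K T : nat) (eta' : R) (ell : nat -> nat -> R)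
  (d A : nat -> nat) (p : nat -> nat -> R) : Prop :=
  forall t a, (1 <= t <= T)%nat -> (a < K)%nat ->
    p t a = qdist K eta' ell A p (observed d (t - 1)) a.

Definition Nt (T : nat) (d : nat -> nat) (t : nat) : nat :=
  length (filter (fun s => andb (Nat.leb t (s + d s)) (Nat.ltb (s + d s) (t + d t)))
                 (seq 1 T)).

Definition Nmax (T : nat) (d : nat -> nat) : nat :=
  fold_right Nat.max 0%nat (map (Nt T d) (seq 1 T)).

Definition is_arrival_order (T : nat) (d z : nat -> nat) : Prop :=
  (forall i, (1 <= i <= T)%nat -> (1 <= z i <= T)%nat) /\
  (forall i j, (1 <= i <= T)%nat -> (1 <= j <= T)%nat -> z i = z j -> i = j) /\
  (forall i j, (1 <= i <= T)%nat -> (1 <= j <= T)%nat -> (i <= j)%nat ->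
     (z i + d (z i) <= z j + d (z j))%nat).

Definition Psi (z : nat -> nat) (i : nat) : list nat := map z (seq 1 i).

From Stdlib Require Import Reals List Lra Lia Permutation.
Import ListNotations.
Open Scope R_scope.

(* Write [q(C)] for the softmax of the cumulated loss estimates over the
   rounds in [C], and [s = z_i].  Appending round [s] to [Psi_{i-1}] is one
   multiplicative-weights step with a loss vector supported on the played
   arm [A_s], so [q(Psi_i) <= q(Psi_{i-1}) / (1 - delta)] as soon as
   [eta' * q^{A_s}(Psi_{i-1}) * lhat_s <= delta] (lemma [mw_step]).
   Since [lhat_s <= 1 / p_s] and [2 eta' <= delta = 1/(4 dmax)], it is
   enough that [q^{A_s}(Psi_{i-1}) <= 2 p_s].  Now [p_s = q(Psi_m)], where
   [Psi_m] is the prefix of the arrival order made of the rounds observed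
   before round [s] ([observed_is_prefix]), and at most [2 dmax] rounds
   separate [m] from [i-1] ([late_arrivals_bound]).  By strong induction on
   [i] each of these rounds multiplies [q^{A_s}] by at most [1/(1-delta)],
   and [(1-delta)^{-2 dmax} <= 2] by Bernoulli's inequality.  Finally
   [1/(1-delta) = 1 + 1/(4 dmax - 1) <= 1 + 1/(2N - 1)] because
   [N <= 2 dmax]. *)

Lemma rsum_snoc (l : list nat) (x : nat) (f : nat -> R) :
  rsum (l ++ [x]) f = rsum l f + f x.
Proof. induction l as [|y l IH]; simpl; [lra | rewrite IH; lra]. Qed.

Lemma rsum_ext (l : list nat) (f g : nat -> R) :
  (forall x, f x = g x) -> rsum l f = rsum l g.
Proof. intro H; induction l as [|y l IH]; simpl; [lra | rewrite IH, H; lra]. Qed.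

Lemma rsum_le (l : list nat) (f g : nat -> R) :
  (forall x, f x <= g x) -> rsum l f <= rsum l g.
Proof. intro H; induction l as [|y l IH]; simpl; [lra | specialize (H y); lra]. Qed.

Lemma rsum_minus_scal (l : list nat) (f g : nat -> R) (c : R) :
  rsum l (fun x => f x - c * g x) = rsum l f - c * rsum l g.
Proof. induction l as [|y l IH]; simpl; [lra | rewrite IH; lra]. Qed.

Lemma rsum_nonneg (l : list nat) (f : nat -> R) :
  (forall x, 0 <= f x) -> 0 <= rsum l f.
Proof. intro H; induction l as [|y l IH]; simpl; [lra | specialize (H y); lra]. Qed.

Lemma rsum_range_pos (K : nat) (f : nat -> R) :
  (1 <= K)%nat -> (forall x, 0 < f x) -> 0 < rsum (seq 0 K) f.
Proof.
  intros HK H. destruct K as [|K]; [lia|]. simpl.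
  pose proof (H 0%nat). pose proof (rsum_nonneg (seq 1 K) f (fun x => Rlt_le _ _ (H x))).
  lra.
Qed.

Lemma rsum_zero (l : list nat) (f : nat -> R) :
  (forall x, In x l -> f x = 0) -> rsum l f = 0.
Proof.
  induction l as [|y l IH]; simpl; intro H; [lra|].
  rewrite H, IH by auto. lra.
Qed.

Lemma rsum_single (l : list nat) (f : nat -> R) (b : nat) :
  NoDup l -> In b l -> (forall c, c <> b -> f c = 0) -> rsum l f = f b.
Proof.
  intros ND. induction ND as [|x l Hx ND IH]; simpl; [tauto|].
  intros [<-|Hin] Hf.
  - rewrite rsum_zero; [lra|]. intros y Hy. apply Hf. intros ->. contradiction.
  - rewrite IH, Hf by (auto; intros ->; contradiction). lra.
Qed.

Lemma rsum_perm (l1 l2 : list nat) (f : nat -> R) :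
  Permutation l1 l2 -> rsum l1 f = rsum l2 f.
Proof. induction 1; simpl; lra. Qed.

Lemma reweighted_total_lb (K : nat) (e : R) (w L : nat -> R) (b : nat) :
  (b < K)%nat -> (forall c, 0 <= w c) -> (forall c, c <> b -> L c = 0) ->
  rsum (seq 0 K) w - e * (w b * L b) <=
  rsum (seq 0 K) (fun c => w c * exp (- e * L c)).
Proof.
  intros Hb Hw HL.
  rewrite <- (rsum_single (seq 0 K) (fun c => w c * L c) b).
  - rewrite <- rsum_minus_scal. apply rsum_le. intro c.
    pose proof (exp_ineq1_le (- e * L c)). pose proof (Hw c). nra.
  - apply seq_NoDup.
  - apply in_seq; lia.
  - intros c Hc. rewrite HL by auto. ring.
Qed.

Lemma mw_step (K : nat) (e dl : R) (w L : nat -> R) (b a : nat) :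
  (b < K)%nat -> 0 <= e -> (forall c, 0 < w c) -> (forall c, 0 <= L c) ->
  (forall c, c <> b -> L c = 0) ->
  e * (w b / rsum (seq 0 K) w) * L b <= dl -> dl < 1 ->
  w a * exp (- e * L a) / rsum (seq 0 K) (fun c => w c * exp (- e * L c)) <=
  / (1 - dl) * (w a / rsum (seq 0 K) w).
Proof.
  intros Hb He Hw HL Hsupp Hloss Hdl.
  set (W := rsum (seq 0 K) w) in *.
  assert (HW : 0 < W) by (apply rsum_range_pos; [lia | exact Hw]).
  assert (Hden : W * (1 - dl) <= rsum (seq 0 K) (fun c => w c * exp (- e * L c))).
  { pose proof (reweighted_total_lb K e w L b Hb (fun c => Rlt_le _ _ (Hw c)) Hsupp).
    assert (e * (w b * L b) <= dl * W).
    { replace (e * (w b * L b)) with (e * (w b / W) * L b * W) by (field; lra).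
      apply Rmult_le_compat_r; lra. }
    fold W in H. lra. }
  assert (Hnum : w a * exp (- e * L a) <= w a).
  { assert (exp (- e * L a) <= 1).
    { rewrite <- exp_0. assert (Hneg : - e * L a <= 0) by (pose proof (HL a); nra).
      destruct Hneg as [Hlt | ->]; [left; now apply exp_increasing | lra]. }
    pose proof (Hw a). nra. }
  pose proof (Hw a).
  assert (0 < W * (1 - dl)) by (apply Rmult_lt_0_compat; lra).
  apply Rle_trans with (w a / (W * (1 - dl))).
  - unfold Rdiv. apply Rmult_le_compat; auto.
    + pose proof (exp_pos (- e * L a)). nra.
    + left; apply Rinv_0_lt_compat; lra.
    + apply Rinv_le_contravar; lra.
  - right. field. lra.
Qed.

Lemma lhat_off_arm (ell : nat -> nat -> R) (A : nat -> nat) (p : nat -> nat -> R)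
  (s c : nat) : c <> A s -> lhat ell A p s c = 0.
Proof. intro Hc. unfold lhat. destruct (Nat.eqb_spec c (A s)); [contradiction | reflexivity]. Qed.

Lemma lhat_at_arm (ell : nat -> nat -> R) (A : nat -> nat) (p : nat -> nat -> R)
  (s : nat) : lhat ell A p s (A s) = ell s (A s) / p s (A s).
Proof. unfold lhat. now rewrite Nat.eqb_refl. Qed.

Lemma qdist_pos (K : nat) (e : R) (ell : nat -> nat -> R) (A : nat -> nat)
  (p : nat -> nat -> R) (C : list nat) (a : nat) :
  (1 <= K)%nat -> 0 < qdist K e ell A p C a.
Proof.
  intro HK. unfold qdist. apply Rdiv_lt_0_compat; [apply exp_pos|].
  apply rsum_range_pos; auto. intros; apply exp_pos.
Qed.

Lemma qdist_perm (K : nat) (e : R) (ell : nat -> nat -> R) (A : nat -> nat)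
  (p : nat -> nat -> R) (C1 C2 : list nat) (a : nat) :
  Permutation C1 C2 -> qdist K e ell A p C1 a = qdist K e ell A p C2 a.
Proof.
  intro H. unfold qdist. rewrite (rsum_perm _ _ _ H).
  f_equal. apply rsum_ext. intro b. now rewrite (rsum_perm _ _ _ H).
Qed.

(* Appending a round to [C] is a multiplicative-weights step with loss
   vector [lhat_s], hence obeys [mw_step]. *)
Lemma qdist_snoc_bound (K : nat) (e dl : R) (ell : nat -> nat -> R) (A : nat -> nat)
  (p : nat -> nat -> R) (C : list nat) (s : nat) :
  0 <= e -> (A s < K)%nat -> 0 <= lhat ell A p s (A s) ->
  e * qdist K e ell A p C (A s) * lhat ell A p s (A s) <= dl -> dl < 1 ->
  forall a, qdist K e ell A p (C ++ [s]) a <= / (1 - dl) * qdist K e ell A p C a.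
Proof.
  intros He HAs Hpos Hloss Hdl a.
  set (w := fun c => exp (- e * rsum C (fun r => lhat ell A p r c))).
  assert (Hw : forall c, exp (- e * rsum (C ++ [s]) (fun r => lhat ell A p r c)) =
                         w c * exp (- e * lhat ell A p s c)).
  { intro c. unfold w. rewrite rsum_snoc, <- exp_plus. f_equal. ring. }
  unfold qdist. rewrite Hw, (rsum_ext _ _ _ Hw).
  apply (mw_step K e dl w (lhat ell A p s) (A s) a); auto.
  - intro c; apply exp_pos.
  - intro c. destruct (Nat.eq_dec c (A s)) as [->|Hc]; [exact Hpos|].
    rewrite lhat_off_arm by exact Hc. lra.
  - apply lhat_off_arm.
Qed.

Lemma bernoulli (k : nat) (x : R) : 0 <= x <= 1 -> 1 - INR k * x <= (1 - x) ^ k.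
Proof.
  intros Hx. induction k as [|k IH]; [simpl; lra|]. rewrite S_INR; simpl.
  pose proof (pos_INR k). nra.
Qed.

Lemma inv_pow_le_2 (k : nat) (x : R) :
  0 <= x <= 1 -> INR k * x <= 1 / 2 -> (/ (1 - x)) ^ k <= 2.
Proof.
  intros Hx Hk. rewrite pow_inv.
  pose proof (bernoulli k x Hx).
  replace 2 with (/ (1 / 2)) by field. apply Rinv_le_contravar; lra.
Qed.

Lemma geometric_growth (f : nat -> R) (r : R) (m k : nat) :
  0 <= r -> (forall j, (m < j <= m + k)%nat -> f j <= r * f (j - 1)%nat) ->
  f (m + k)%nat <= r ^ k * f m.
Proof.
  intros Hr. induction k as [|k IH]; intro Hstep.
  - rewrite Nat.add_0_r. simpl. lra.
  - replace (m + S k)%nat with (S (m + k)) by lia.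
    eapply Rle_trans; [apply Hstep; lia|].
    replace (S (m + k) - 1)%nat with (m + k)%nat by lia. simpl.
    rewrite Rmult_assoc. apply Rmult_le_compat_l; auto.
    apply IH. intros j Hj. apply Hstep. lia.
Qed.

Lemma Nt_le (T : nat) (d : nat -> nat) (D t : nat) :
  (forall t, (1 <= t <= T)%nat -> (d t <= D)%nat) -> (1 <= t <= T)%nat ->
  (Nt T d t <= 2 * D)%nat.
Proof.
  intros hd Ht. unfold Nt.
  apply Nat.le_trans with (length (seq (t - D) D ++ seq t (d t))).
  - apply NoDup_incl_length; [apply NoDup_filter, seq_NoDup|].
    intros r Hr. apply filter_In in Hr as [Hr Hf]. apply in_seq in Hr.
    apply andb_prop in Hf as [H1 H2]. apply Nat.leb_le in H1. apply Nat.ltb_lt in H2.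
    specialize (hd r ltac:(lia)). apply in_or_app.
    destruct (Nat.lt_ge_cases r t); [left | right]; apply in_seq; lia.
  - rewrite length_app, !length_seq. specialize (hd t Ht). lia.
Qed.

Lemma Nmax_le (T : nat) (d : nat -> nat) (D : nat) :
  (forall t, (1 <= t <= T)%nat -> (d t <= D)%nat) -> (Nmax T d <= 2 * D)%nat.
Proof.
  intros hd. unfold Nmax.
  assert (Hall : forall x, In x (map (Nt T d) (seq 1 T)) -> (x <= 2 * D)%nat).
  { intros x Hx. apply in_map_iff in Hx as [t [<- Ht]]. apply in_seq in Ht.
    apply Nt_le; auto; lia. }
  induction (map (Nt T d) (seq 1 T)) as [|x l IH]; simpl; [lia|].
  apply Nat.max_lub; [apply Hall; now left | apply IH; intros y Hy; apply Hall; now right].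
Qed.

Lemma Psi_snoc (z : nat -> nat) (i : nat) :
  (1 <= i)%nat -> Psi z i = Psi z (i - 1) ++ [z i].
Proof.
  intro Hi. unfold Psi. replace i with (S (i - 1)) at 1 by lia.
  rewrite seq_S, map_app. simpl. now replace (S (i - 1)) with i by lia.
Qed.

Section ArrivalOrder.

Variables (T : nat) (d z : nat -> nat).
Hypothesis hz : is_arrival_order T d z.

Lemma z_range : forall i, (1 <= i <= T)%nat -> (1 <= z i <= T)%nat.
Proof. exact (proj1 hz). Qed.

Lemma z_inj : forall i j, (1 <= i <= T)%nat -> (1 <= j <= T)%nat -> z i = z j -> i = j.
Proof. exact (proj1 (proj2 hz)). Qed.

Lemma z_mono : forall i j, (1 <= i <= T)%nat -> (1 <= j <= T)%nat -> (i <= j)%nat ->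
  (z i + d (z i) <= z j + d (z j))%nat.
Proof. exact (proj2 (proj2 hz)). Qed.

Lemma z_window_NoDup (a n : nat) :
  (1 <= a)%nat -> (a + n <= T + 1)%nat -> NoDup (map z (seq a n)).
Proof.
  revert a. induction n as [|n IH]; intros a Ha Han; simpl; constructor.
  - intro Hin. apply in_map_iff in Hin as [j [Ej Hj]]. apply in_seq in Hj.
    assert (j = a) by (apply z_inj; lia). lia.
  - apply IH; lia.
Qed.

(* An injection of [[1,T]] into itself is onto. *)
Lemma z_onto (x : nat) : (1 <= x <= T)%nat -> exists j, (1 <= j <= T)%nat /\ z j = x.
Proof.
  intro Hx.
  assert (Hincl : incl (seq 1 T) (map z (seq 1 T))).
  { apply NoDup_length_incl.
    - apply z_window_NoDup; lia.
    - rewrite length_map; lia.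
    - intros y Hy. apply in_map_iff in Hy as [j [<- Hj]]. apply in_seq in Hj.
      apply in_seq. pose proof (z_range j). lia. }
  assert (Hxs : In x (seq 1 T)) by (apply in_seq; lia).
  apply Hincl, in_map_iff in Hxs as [j [Ej Hj]]. apply in_seq in Hj.
  exists j; split; [lia | exact Ej].
Qed.

(* Arrival times are sorted along [z], so the rounds arriving before [s]
   are exactly [z 1, ..., z m] for some [m]. *)
Lemma arrival_prefix (s : nat) :
  exists m, (m <= T)%nat /\
    forall j, (1 <= j <= T)%nat -> ((z j + d (z j) < s)%nat <-> (j <= m)%nat).
Proof.
  assert (H : forall n, (n <= T)%nat -> exists m, (m <= n)%nat /\
            forall j, (1 <= j <= n)%nat -> ((z j + d (z j) < s)%nat <-> (j <= m)%nat)).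
  { induction n as [|n IH]; intro Hn.
    - exists 0%nat. split; [lia | intros; lia].
    - destruct (IH ltac:(lia)) as [m [Hm Hpre]].
      destruct (Compare_dec.lt_dec (z (S n) + d (z (S n))) s) as [Hlt|Hge].
      + exists (S n). split; [lia|]. intros j Hj. split; [lia|]. intros _.
        pose proof (z_mono j (S n) ltac:(lia) ltac:(lia) ltac:(lia)). lia.
      + exists m. split; [lia|]. intros j Hj.
        destruct (Nat.eq_dec j (S n)) as [->|Hjn]; [split; [contradiction | lia]|].
        apply Hpre. lia. }
  destruct (H T (le_n T)) as [m [Hm Hpre]]. now exists m.
Qed.

Lemma observed_is_prefix (s m : nat) :
  (s <= T)%nat -> (m <= T)%nat ->
  (forall j, (1 <= j <= T)%nat -> ((z j + d (z j) < s)%nat <-> (j <= m)%nat)) ->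
  Permutation (observed d (s - 1)) (Psi z m).
Proof.
  intros Hs Hm Hpre. apply NoDup_Permutation.
  - apply NoDup_filter, seq_NoDup.
  - apply z_window_NoDup; lia.
  - intro x; unfold observed, Psi. rewrite filter_In, in_seq, in_map_iff, Nat.leb_le.
    split.
    + intros [Hx Harr]. destruct (z_onto x ltac:(lia)) as [j [Hj <-]].
      exists j. split; [reflexivity|]. apply in_seq.
      assert (j <= m)%nat by (apply Hpre; lia). lia.
    + intros [j [<- Hj]]. apply in_seq in Hj.
      assert (z j + d (z j) < s)%nat by (apply Hpre; lia).
      pose proof (z_range j). lia.
Qed.

(* Between the prefix observed before [z i] and [z i] itself lie at most
   [2 D] rounds: their arrival lies in [[z i, z i + d (z i)]], so they are
   distinct from [z i] and lie in [[z i - D, z i + d (z i)]]. *)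
Lemma late_arrivals_bound (D i m : nat) :
  (forall t, (1 <= t <= T)%nat -> (d t <= D)%nat) -> (1 <= i <= T)%nat ->
  (forall j, (1 <= j <= T)%nat -> ((z j + d (z j) < z i)%nat <-> (j <= m)%nat)) ->
  (i - 1 - m <= 2 * D)%nat.
Proof.
  intros hd Hi Hpre.
  pose proof (z_range i Hi) as Hs.
  assert (Hmi : (m < i)%nat).
  { destruct (Nat.lt_ge_cases m i) as [|Him]; [assumption|].
    apply Hpre in Him; [lia | exact Hi]. }
  apply Nat.le_trans with (length (seq (z i - D) D ++ seq (S (z i)) (d (z i)))).
  - replace (i - 1 - m)%nat with (length (map z (seq (S m) (i - 1 - m))))
      by (now rewrite length_map, length_seq).
    apply NoDup_incl_length; [apply z_window_NoDup; lia|].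
    intros r Hr. apply in_map_iff in Hr as [j [<- Hj]]. apply in_seq in Hj.
    assert (Hlate : ~ (z j + d (z j) < z i)%nat) by (rewrite Hpre; lia).
    pose proof (z_mono j i ltac:(lia) Hi ltac:(lia)).
    assert (z j <> z i) by (intro E; apply z_inj in E; lia).
    pose proof (hd (z j) (z_range j ltac:(lia))).
    apply in_or_app. destruct (Nat.lt_ge_cases (z j) (z i)); [left | right]; apply in_seq; lia.
  - rewrite length_app, !length_seq. pose proof (hd (z i) Hs). lia.
Qed.

End ArrivalOrder.

Section DEWStability.

Variables (K T dmax : nat) (ell : nat -> nat -> R) (d A z : nat -> nat)
  (p : nat -> nat -> R) (e delta : R).
Hypothesis hK : (1 <= K)%nat.
Hypothesis hell : forall t a, (1 <= t <= T)%nat -> (a < K)%nat -> 0 <= ell t a <= 1.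
Hypothesis hd : forall t, (1 <= t <= T)%nat -> (d t <= dmax)%nat.
Hypothesis hA : forall t, (1 <= t <= T)%nat -> (A t < K)%nat.
Hypothesis hp : is_DEW_prob K T e ell d A p.
Hypothesis hz : is_arrival_order T d z.
Hypothesis he : 0 <= e.
Hypothesis hdelta : 0 <= delta < 1.
Hypothesis he_delta : 2 * e <= delta.
Hypothesis hdelta_dmax : INR (2 * dmax) * delta <= 1 / 2.

Lemma played_prob_prefix (i : nat) : (1 <= i <= T)%nat ->
  exists m, (m < i)%nat /\ (i - 1 - m <= 2 * dmax)%nat /\
    p (z i) (A (z i)) = qdist K e ell A p (Psi z m) (A (z i)).
Proof.
  intro Hi. pose proof (z_range T d z hz i Hi) as Hs.
  destruct (arrival_prefix T d z hz (z i)) as [m [Hm Hpre]].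
  exists m. split; [|split].
  - destruct (Nat.lt_ge_cases m i) as [|Him]; [assumption|].
    apply Hpre in Him; [lia | exact Hi].
  - exact (late_arrivals_bound T d z hz dmax i m hd Hi Hpre).
  - rewrite hp by auto. apply qdist_perm, (observed_is_prefix T d z hz); auto; lia.
Qed.

(* The one-step stability bound, proved by strong induction on [i] in the
   form "for every [i <= n]". *)
Lemma dew_stability_upto (n : nat) : forall i a,
  (1 <= i <= T)%nat -> (i <= n)%nat -> (a < K)%nat ->
  qdist K e ell A p (Psi z i) a <= / (1 - delta) * qdist K e ell A p (Psi z (i - 1)) a.
Proof.
  induction n as [|n IH]; intros i a Hi Hin Ha; [lia|].
  set (s := z i).
  pose proof (z_range T d z hz i Hi) as Hs. pose proof (hA s Hs) as HAs.
  destruct (played_prob_prefix i Hi) as [m [Hmi [Hlag Hps]]]. fold s in Hps.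
  set (q := fun j => qdist K e ell A p (Psi z j) (A s)).
  assert (Hpos : 0 < p s (A s)) by (rewrite Hps; now apply qdist_pos).
  (* Between [Psi z m] and [Psi z (i - 1)] the weight of [A s] at most doubles. *)
  assert (Hdouble : q (i - 1)%nat <= 2 * p s (A s)).
  { replace (i - 1)%nat with (m + (i - 1 - m))%nat by lia.
    assert (Hratio : 0 <= / (1 - delta)) by (left; apply Rinv_0_lt_compat; lra).
    eapply Rle_trans; [apply (geometric_growth q); [exact Hratio|]|].
    - intros j Hj. apply IH; lia.
    - change (q m) with (qdist K e ell A p (Psi z m) (A s)). rewrite <- Hps.
      apply Rmult_le_compat_r; [lra|].
      apply inv_pow_le_2; [lra|].
      apply Rle_trans with (INR (2 * dmax) * delta); [|exact hdelta_dmax].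
      apply Rmult_le_compat_r; [lra | now apply le_INR]. }
  (* Hence the expected loss estimate of the step is at most [2 e <= delta]. *)
  assert (Hloss : e * q (i - 1)%nat * lhat ell A p s (A s) <= delta).
  { rewrite lhat_at_arm. pose proof (hell s (A s) Hs HAs).
    assert (q (i - 1)%nat * (ell s (A s) / p s (A s)) <= 2).
    { apply Rle_trans with (2 * p s (A s) * (1 / p s (A s))).
      - apply Rmult_le_compat; try lra.
        + left; apply qdist_pos; lia.
        + apply Rmult_le_pos; [lra | left; now apply Rinv_0_lt_compat].
        + apply Rmult_le_compat_r; [left; now apply Rinv_0_lt_compat | lra].
      - right. field. lra. }
    nra. }
  rewrite (Psi_snoc z i) by lia.
  apply qdist_snoc_bound; auto; try lra.
  rewrite lhat_at_arm. apply Rmult_le_pos; [apply hell; auto | left; now apply Rinv_0_lt_compat].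
Qed.

End DEWStability.

(* The parameters of DEW: with [delta = 1/(4 dmax)], the effective rate
   satisfies [2 eta' <= delta] because [e > 2], and the resulting ratio
   [1/(1 - delta)] is the one claimed, since [N <= 2 dmax]. *)

Lemma eta_eff_pos (eta : R) (dmax : nat) : 0 < eta -> 0 < eta_eff eta dmax.
Proof.
  intro heta. unfold eta_eff. destruct (Nat.eqb_spec dmax 0) as [|Hd]; [exact heta|].
  apply Rmin_glb_lt; [exact heta|]. apply Rinv_0_lt_compat.
  assert (0 < INR dmax) by (apply lt_0_INR; lia).
  pose proof (exp_pos 1). apply Rmult_lt_0_compat; [|assumption]. lra.
Qed.

Lemma eta_eff_slack (eta : R) (dmax : nat) :
  (1 <= dmax)%nat -> 2 * eta_eff eta dmax <= / (4 * INR dmax).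
Proof.
  intro Hd. unfold eta_eff. destruct (Nat.eqb_spec dmax 0) as [|_]; [lia|].
  assert (HD : 1 <= INR dmax) by (apply (le_INR 1); exact Hd).
  assert (He : 2 < exp 1) by (pose proof (exp_ineq1 1 ltac:(lra)); lra).
  apply Rle_trans with (2 * / (4 * exp 1 * INR dmax)); [pose proof (Rmin_r eta (/ (4 * exp 1 * INR dmax))); lra|].
  replace (2 * / (4 * exp 1 * INR dmax)) with (/ (2 * exp 1 * INR dmax)) by (field; lra).
  apply Rinv_le_contravar; nra.
Qed.

Lemma slack_ratio (dmax N : nat) :
  (1 <= N)%nat -> (N <= 2 * dmax)%nat ->
  / (1 - / (4 * INR dmax)) <= 1 + 1 / (2 * INR N - 1).
Proof.
  intros HN HNd.
  assert (Hx1 : 1 <= INR N) by (apply (le_INR 1); exact HN).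
  assert (Hx2 : INR N <= 2 * INR dmax) by (rewrite <- (mult_INR 2); now apply le_INR).
  replace (/ (1 - / (4 * INR dmax))) with (1 + 1 / (4 * INR dmax - 1)) by (field; lra).
  apply Rplus_le_compat_l. unfold Rdiv. rewrite !Rmult_1_l.
  apply Rinv_le_contravar; lra.
Qed.

Theorem lemma10
  (K T : nat) (hK : (2 <= K)%nat) (hT : (1 <= T)%nat)
  (ell : nat -> nat -> R) (d : nat -> nat) (eta : R) (dmax : nat)
  (hell : forall t a, (1 <= t <= T)%nat -> (a < K)%nat -> 0 <= ell t a <= 1)
  (heta : 0 < eta)
  (hd : forall t, (1 <= t <= T)%nat -> (d t <= dmax)%nat)
  (hN : (1 <= Nmax T d)%nat)
  (A : nat -> nat) (hA : forall t, (1 <= t <= T)%nat -> (A t < K)%nat)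
  (p : nat -> nat -> R) (hp : is_DEW_prob K T (eta_eff eta dmax) ell d A p)
  (z : nat -> nat) (hz : is_arrival_order T d z) :
  forall i a, (1 <= i <= T)%nat -> (a < K)%nat ->
    qdist K (eta_eff eta dmax) ell A p (Psi z i) a <=
    (1 + 1 / (2 * INR (Nmax T d) - 1)) *
    qdist K (eta_eff eta dmax) ell A p (Psi z (i - 1)) a.
Proof.
  intros i a Hi Ha.
  pose proof (Nmax_le T d dmax hd) as HN2.
  assert (Hdmax : (1 <= dmax)%nat) by lia.
  assert (HD : 1 <= INR dmax) by (apply (le_INR 1); exact Hdmax).
  set (delta := / (4 * INR dmax)).
  assert (Hdelta : 0 <= delta < 1).
  { unfold delta. split; [left; apply Rinv_0_lt_compat; lra|].
    apply Rle_lt_trans with (/ 4); [apply Rinv_le_contravar; lra | lra]. }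
  assert (Hdelta_dmax : INR (2 * dmax) * delta <= 1 / 2).
  { unfold delta. rewrite mult_INR. right. simpl. field. lra. }
  eapply Rle_trans.
  - apply (dew_stability_upto K T dmax ell d A z p (eta_eff eta dmax) delta) with (n := i);
      auto; try lia.
    + left; now apply eta_eff_pos.
    + now apply eta_eff_slack.
  - apply Rmult_le_compat_r; [left; apply qdist_pos; lia|].
    now apply slack_ratio.
Qed.
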